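(* For each $p\ge1$ let $\theta=\theta^{(p)},w=w^{(p)}\in\mathbb{R}^p$ (possibly random), $\eta=\theta+w$, and let $\hat\nu=\hat\nu_p$ be an estimator. Suppose there are constants $m\in\mathbb{R}$ and $\nu,\xi\in(0,\infty)$ such that, as $p\to\infty$ (almost surely in the random case): (i) $\bar\theta\to m$ and $\mathrm{var}(\theta)\to\xi^2$; (ii) $\bar w\to0$ and $\mathrm{var}(w)\to\nu^2$; (iii) $\mathrm{cov}(\theta,w)\to0$; (iv) $\hat\nu_p\to\nu$. Let $$\mathrm{SNR}=\frac{\xi}{\nu},\quad r_\infty=\frac1{\sqrt{1+(m/\xi)^2}},\quad c_\infty=\frac{\mathrm{SNR}^2}{1+\mathrm{SNR}^2},\quad d_\infty=c_\infty+\frac{r_\infty^2}{1+\mathrm{SNR}^2}.$$ Let $c=1-\hat\nu^2/\mathrm{var}(\eta)$ and $\eta(c)=\bar\eta+c(\eta-\bar\eta)$. Then $$\mathrm{MSE}_\infty(\eta(c),\theta)=c_\infty\,\mathrm{MSE}_\infty(\eta,\theta)\quad\text{and}\quad \mathrm{SPH}_\infty(\eta(c),\theta)=d_\infty\,\mathrm{SPH}_\infty(\eta,\theta),$$ where the subscript $\infty$ denotes the (almost sure) limit as $p\to\infty$. Moreover, the quantities $c^{\mathrm{MSE}}=\mathrm{cov}(\theta,\eta)/\mathrm{var}(\eta)$ and $c^{\mathrm{SPH}}=(\bar\eta/\bar\theta)\,c^{\mathrm{MSE}}$ converge to $c_\infty$ as $p\to\infty$.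
   Context: For $u,v\in\mathbb{R}^p$: $\bar u=\frac1p\sum_i u_i$, $\mathrm{var}(u)=\frac1p\sum_i(u_i-\bar u)^2$, $\mathrm{cov}(u,v)=\frac1p\sum_i(u_i-\bar u)(v_i-\bar v)$; for $x\in\mathbb{R}$, $u-x$ and $x+u$ are componentwise. $\mathrm{MSE}_p(u,\theta)=\langle u-\theta,u-\theta\rangle/p$ and, for nonzero $u,\theta$, $\mathrm{SPH}_p(u,\theta)=1-\left(\frac{\langle u,\theta\rangle}{|u||\theta|}\right)^2$. The quantities $c^{\mathrm{MSE}}$ and $c^{\mathrm{SPH}}$ are the minimizers over $c$ of $\mathrm{MSE}_p(\eta(c),\theta)$ and $\mathrm{SPH}_p(\eta(c),\theta)$ respectively. *)

From HB Require Import structures.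
From mathcomp Require Import all_boot all_order all_algebra.
From mathcomp Require Import all_classical all_reals all_analysis.
Set Implicit Arguments. Unset Strict Implicit. Unset Printing Implicit Defensive.
Import Order.TTheory GRing.Theory Num.Theory.
Local Open Scope ring_scope.

Section Defs.
Variable R : realType.
Variable p : nat.
Implicit Types (u v : 'I_p -> R) (x c : R).

Definition mean u : R := (\sum_(i < p) u i) / p%:R.
Definition var u : R := mean (fun i => (u i - mean u) ^+ 2).
Definition cov u v : R := mean (fun i => (u i - mean u) * (v i - mean v)).
Definition dot u v : R := \sum_(i < p) u i * v i.
Definition vnorm u : R := Num.sqrt (dot u u).
Definition MSE u (th : 'I_p -> R) : R :=
  dot (fun i => u i - th i) (fun i => u i - th i) / p%:R.
Definition SPH u (th : 'I_p -> R) : R :=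
  1 - (dot u th / (vnorm u * vnorm th)) ^+ 2.
Definition shrink (eta : 'I_p -> R) c : 'I_p -> R :=
  fun i => mean eta + c * (eta i - mean eta).
Definition cMSE (th eta : 'I_p -> R) : R := cov th eta / var eta.
Definition cSPH (th eta : 'I_p -> R) : R := (mean eta / mean th) * cMSE th eta.
End Defs.

Section Consts.
Variable R : realType.
Definition SNR (xi nu : R) : R := xi / nu.
Definition r_inf (m xi : R) : R := 1 / Num.sqrt (1 + (m / xi) ^+ 2).
Definition c_inf (xi nu : R) : R := SNR xi nu ^+ 2 / (1 + SNR xi nu ^+ 2).
Definition d_inf (m xi nu : R) : R :=
  c_inf xi nu + r_inf m xi ^+ 2 / (1 + SNR xi nu ^+ 2).
End Consts.

From HB Require Import structures.
From mathcomp Require Import all_boot all_order all_algebra.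
From mathcomp Require Import all_classical all_reals all_analysis.
From mathcomp Require Import ring.
Import Order.TTheory GRing.Theory Num.Theory numFieldNormedType.Exports.
Local Open Scope ring_scope.
Local Open Scope classical_set_scope.

(* For p > 0, the shrunk vector [shrink eta c] is an affine combination of
   theta and w, so MSE, SPH, c^MSE and c^SPH are rational functions of c and of
   the moments mean theta, mean w, var theta, var w, cov(theta, w).  The
   hypotheses make these moments converge, so each quantity converges to the
   rational function evaluated at the limits; the two identities relating
   limits at c = c_inf and at c = 1 are then field identities in m, xi, nu. *)

Section Moments.
Context {R : realType} {p : nat}.
Implicit Types (u v z : 'I_p -> R) (a b k : R).

Lemma var_cov u : var u = cov u u.
Proof. by []. Qed.

Lemma covC u v : cov u v = cov v u.
Proof. by congr mean; apply/funext => i; rewrite mulrC. Qed.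

Lemma shrink1 u : shrink u 1 = u.
Proof. by apply/funext => i; rewrite /shrink mul1r addrC subrK. Qed.

Hypothesis p_gt0 : (0 < p)%N.

Let p_neq0 : p%:R != 0 :> R.
Proof. by rewrite pnatr_eq0 -lt0n. Qed.

Lemma mean_comb a b k u v :
  mean (fun i => a * u i + b * v i + k) = a * mean u + b * mean v + k.
Proof.
by rewrite /mean !big_split -!mulr_sumr sumr_const card_ord -mulr_natr /=; field.
Qed.

Lemma cov_combl a b k u v z :
  cov (fun i => a * u i + b * v i + k) z = a * cov u z + b * cov v z.
Proof.
rewrite {1}/cov mean_comb.
have -> : (fun i => (a * u i + b * v i + k - (a * mean u + b * mean v + k)) * (z i - mean z))
  = (fun i => a * ((u i - mean u) * (z i - mean z))
             + b * ((v i - mean v) * (z i - mean z)) + 0).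
  by apply/funext => i; ring.
by rewrite mean_comb addr0.
Qed.

Lemma cov_combr a b k u v z :
  cov z (fun i => a * u i + b * v i + k) = a * cov z u + b * cov z v.
Proof. by rewrite covC cov_combl !(covC z). Qed.

Let add_comb u v : (fun i => u i + v i) = (fun i => 1 * u i + 1 * v i + 0).
Proof. by apply/funext => i; ring. Qed.

Lemma meanD u v : mean (fun i => u i + v i) = mean u + mean v.
Proof. by rewrite add_comb mean_comb; ring. Qed.

Lemma covDr u v z : cov z (fun i => u i + v i) = cov z u + cov z v.
Proof. by rewrite add_comb cov_combr; ring. Qed.

Lemma varD u v : var (fun i => u i + v i) = var u + var v + 2 * cov u v.
Proof.
by rewrite add_comb var_cov cov_combl !cov_combr -!var_cov (covC v u); ring.
Qed.

Lemma mean_mul u v : mean (fun i => u i * v i) = cov u v + mean u * mean v.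
Proof.
rewrite /cov; set mu := mean u; set mv := mean v.
have -> : (fun i => (u i - mu) * (v i - mv)) =
  (fun i => 1 * (u i * v i - mv * u i) + (- mu) * v i + mu * mv).
  by apply/funext => i; ring.
rewrite mean_comb.
have -> : (fun i => u i * v i - mv * u i) = (fun i => 1 * (u i * v i) + (- mv) * u i + 0).
  by apply/funext => i; ring.
by rewrite !mean_comb /mu /mv; ring.
Qed.

Lemma dot_ge0 u : 0 <= dot u u.
Proof. by apply: sumr_ge0 => i _; rewrite -expr2 sqr_ge0. Qed.

Lemma SPH_mean u v : SPH u v =
  1 - mean (fun i => u i * v i) ^+ 2 /
      (mean (fun i => u i * u i) * mean (fun i => v i * v i)).
Proof.
rewrite /SPH /vnorm expr_div_n exprMn !sqr_sqrtr ?dot_ge0 //.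
rewrite /mean -/(dot u v) -/(dot u u) -/(dot v v) expr_div_n !invfM.
by set iuu := (dot u u)^-1; set ivv := (dot v v)^-1; field.
Qed.

(* The dummy [0 * u i] fits the two-vector shape of [mean_comb] and [cov_combl]. *)
Lemma shrink_comb u c :
  shrink u c = (fun i => c * u i + 0 * u i + (1 - c) * mean u).
Proof. by apply/funext => i; rewrite /shrink; ring. Qed.

Lemma mean_shrink u c : mean (shrink u c) = mean u.
Proof. by rewrite shrink_comb mean_comb; ring. Qed.

Lemma cov_shrinkl u v c : cov (shrink u c) v = c * cov u v.
Proof. by rewrite shrink_comb cov_combl; ring. Qed.

Lemma var_shrink u c : var (shrink u c) = c ^+ 2 * var u.
Proof. by rewrite !var_cov cov_shrinkl covC cov_shrinkl; ring. Qed.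

Lemma MSE_shrink u v c : MSE (shrink u c) v =
  c ^+ 2 * var u - 2 * c * cov v u + var v + (mean u - mean v) ^+ 2.
Proof.
have -> : MSE (shrink u c) v = mean (fun i =>
    (c * u i + (-1) * v i + (1 - c) * mean u) * (c * u i + (-1) * v i + (1 - c) * mean u)).
  by congr (_ / _); apply: eq_bigr => i _; rewrite /shrink; ring.
by rewrite mean_mul cov_combl !cov_combr mean_comb -!var_cov (covC u v); ring.
Qed.

Lemma SPH_shrink u v c : SPH (shrink u c) v =
  1 - (c * cov v u + mean u * mean v) ^+ 2 /
      ((c ^+ 2 * var u + mean u ^+ 2) * (var v + mean v ^+ 2)).
Proof.
by rewrite SPH_mean !mean_mul -!var_cov var_shrink cov_shrinkl mean_shrink (covC u).
Qed.

End Moments.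

Section Asymptotics.
Context {R : realType}.
Variables (m xi nu : R).
Hypotheses (xi_gt0 : 0 < xi) (nu_gt0 : 0 < nu).

(* The limits of MSE_p and SPH_p of [shrink eta c_p] when c_p tends to c;
   c = 1 gives those of eta itself. *)
Definition MSE_inf (c : R) : R := (c - 1) ^+ 2 * xi ^+ 2 + c ^+ 2 * nu ^+ 2.
Definition SPH_inf (c : R) : R :=
  1 - (c * xi ^+ 2 + m ^+ 2) ^+ 2 /
      ((c ^+ 2 * (xi ^+ 2 + nu ^+ 2) + m ^+ 2) * (xi ^+ 2 + m ^+ 2)).

Let xi2_gt0 : 0 < xi ^+ 2. Proof. exact: exprn_gt0. Qed.
Let xi2_nu2_gt0 : 0 < xi ^+ 2 + nu ^+ 2. Proof. by rewrite addr_gt0 ?exprn_gt0. Qed.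
Let xi2_m2_gt0 : 0 < xi ^+ 2 + m ^+ 2. Proof. by rewrite ltr_wpDr ?sqr_ge0. Qed.
Let xi2_nu2_m2_gt0 : 0 < xi ^+ 2 + nu ^+ 2 + m ^+ 2. Proof. by rewrite ltr_wpDr ?sqr_ge0. Qed.

Lemma c_infE : c_inf xi nu = xi ^+ 2 / (xi ^+ 2 + nu ^+ 2).
Proof. by rewrite /c_inf /SNR; field; rewrite !gt_eqF. Qed.

Lemma c_inf_gt0 : 0 < c_inf xi nu.
Proof. by rewrite c_infE divr_gt0. Qed.

Lemma MSE_inf_c_inf : MSE_inf (c_inf xi nu) = c_inf xi nu * MSE_inf 1.
Proof. by rewrite /MSE_inf c_infE; field; rewrite gt_eqF. Qed.

Lemma r_inf_sqr : r_inf m xi ^+ 2 = xi ^+ 2 / (xi ^+ 2 + m ^+ 2).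
Proof.
rewrite /r_inf expr_div_n sqr_sqrtr ?expr1n; last by rewrite addr_ge0 // sqr_ge0.
by field; rewrite !gt_eqF.
Qed.

Lemma SPH_inf_c_inf : SPH_inf (c_inf xi nu) = d_inf m xi nu * SPH_inf 1.
Proof.
rewrite /SPH_inf /d_inf r_inf_sqr c_infE /SNR; field.
by rewrite (addrC (nu ^+ 2)) !gt_eqF // ltr_wpDr ?exprn_gt0 // mulr_ge0 ?sqr_ge0 // ltW.
Qed.

End Asymptotics.

(* The finite-p identities hold only for p > 0: at p = 0, [mean] divides by 0. *)
Lemma cvg_eq_pos {R : realType} {u v : nat -> R} {l : R} :
  (forall n, (0 < n)%N -> u n = v n) -> v @ \oo --> l -> u @ \oo --> l.
Proof.
move=> uv; apply: cvg_trans; apply: near_eq_cvg.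
by near=> n; apply/esym/uv; near: n; exists 1%N.
Unshelve. all: by end_near.
Qed.

Lemma cvg_lim_eq {R : realType} {u : nat -> R} {a b : R} :
  a = b -> u @ \oo --> a -> u @ \oo --> b.
Proof. by move->. Qed.

(* Breaks the limit of a rational expression in sequences into limits found in
   the context, leaving the nonvanishing conditions of [cvgV] as goals. *)
Ltac cvg_rational :=
  lazymatch goal with
  | |- is_true (_ != 0) => idtac
  | |- _ => first [ eassumption | apply: cvg_cst
                  | apply: cvgD; cvg_rational | apply: cvgN; cvg_rational
                  | apply: cvgM; cvg_rational | apply: cvgV; cvg_rational ]
  end.

Section Limits.
Variables (R : realType) (theta w : forall p : nat, 'I_p -> R) (m xi nu : R).
Hypotheses (xi_gt0 : 0 < xi) (nu_gt0 : 0 < nu).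
Hypotheses (mean_theta : (fun p => mean (theta p)) @ \oo --> m)
  (var_theta : (fun p => var (theta p)) @ \oo --> xi ^+ 2)
  (mean_w : (fun p => mean (w p)) @ \oo --> 0)
  (var_w : (fun p => var (w p)) @ \oo --> nu ^+ 2)
  (cov_theta_w : (fun p => cov (theta p) (w p)) @ \oo --> 0).

Local Notation eta p := (fun i : 'I_p => theta p i + w p i).

Lemma mean_eta_cvg : (fun p => mean (eta p)) @ \oo --> m.
Proof.
apply: (cvg_eq_pos (fun (p : nat) p_gt0 => meanD p_gt0 (theta p) (w p))).
by apply: cvg_lim_eq (addr0 m) _; cvg_rational.
Qed.

Lemma mean_eta_sub_cvg :
  (fun p => mean (eta p) - mean (theta p)) @ \oo --> 0.
Proof.
apply: (cvg_eq_pos (v := fun p => mean (w p))) => // p p_gt0.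
by rewrite meanD // addrAC subrr add0r.
Qed.

Lemma var_eta_cvg : (fun p => var (eta p)) @ \oo --> xi ^+ 2 + nu ^+ 2.
Proof.
apply: (cvg_eq_pos (fun (p : nat) p_gt0 => varD p_gt0 (theta p) (w p))).
by apply: cvg_lim_eq _ _; [|cvg_rational]; rewrite mulr0 addr0.
Qed.

Lemma cov_eta_cvg : (fun p => cov (theta p) (eta p)) @ \oo --> xi ^+ 2.
Proof.
apply: (cvg_eq_pos (fun (p : nat) p_gt0 => covDr p_gt0 (theta p) (w p) (theta p))).
by apply: cvg_lim_eq _ _; [|cvg_rational]; rewrite addr0.
Qed.

Let xi2_nu2_neq0 : xi ^+ 2 + nu ^+ 2 != 0.
Proof. by rewrite gt_eqF // addr_gt0 ?exprn_gt0. Qed.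

Lemma shrink_factor_cvg (nuhat : nat -> R) : nuhat @ \oo --> nu ->
  (fun p => 1 - nuhat p ^+ 2 / var (eta p)) @ \oo --> c_inf xi nu.
Proof.
move=> nuhat_nu; have var_eta := var_eta_cvg.
apply: cvg_lim_eq _ _; [|cvg_rational] => //.
by rewrite c_infE //; field.
Qed.

Lemma MSE_shrink_cvg (c : nat -> R) (c0 : R) : c @ \oo --> c0 ->
  (fun p => MSE (shrink (eta p) (c p)) (theta p)) @ \oo --> MSE_inf xi nu c0.
Proof.
move=> c_c0; have var_eta := var_eta_cvg; have cov_eta := cov_eta_cvg.
have mean_eta_sub := mean_eta_sub_cvg.
apply: (cvg_eq_pos (fun (p : nat) p_gt0 => MSE_shrink p_gt0 _ _ _)).
by apply: cvg_lim_eq _ _; [|cvg_rational]; rewrite /MSE_inf; ring.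
Qed.

Lemma SPH_shrink_cvg (c : nat -> R) (c0 : R) : c @ \oo --> c0 -> c0 != 0 ->
  (fun p => SPH (shrink (eta p) (c p)) (theta p)) @ \oo --> SPH_inf m xi nu c0.
Proof.
move=> c_c0 c0_neq0; have var_eta := var_eta_cvg; have mean_eta := mean_eta_cvg.
have cov_eta := cov_eta_cvg.
apply: (cvg_eq_pos (fun (p : nat) p_gt0 => SPH_shrink p_gt0 _ _ _)).
apply: cvg_lim_eq _ _; [|cvg_rational].
  by rewrite /SPH_inf -!expr2.
have c02_gt0 : 0 < c0 ^+ 2 by rewrite exprn_even_gt0 ?c0_neq0 ?orbT.
rewrite -!expr2; apply: mulf_neq0; rewrite gt_eqF // ltr_wpDr ?sqr_ge0 //.
  by rewrite mulr_gt0 // addr_gt0 ?exprn_gt0.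
exact: exprn_gt0.
Qed.

Lemma cMSE_cvg : (fun p => cMSE (theta p) (eta p)) @ \oo --> c_inf xi nu.
Proof.
have var_eta := var_eta_cvg; have cov_eta := cov_eta_cvg.
rewrite /cMSE; apply: cvg_lim_eq _ _; [|cvg_rational] => //.
by rewrite c_infE.
Qed.

Lemma cSPH_cvg : m != 0 -> (fun p => cSPH (theta p) (eta p)) @ \oo --> c_inf xi nu.
Proof.
move=> m_neq0; have mean_eta := mean_eta_cvg; have cMSE_eta := cMSE_cvg.
rewrite /cSPH; apply: cvg_lim_eq _ _; [|cvg_rational] => //.
by rewrite mulfV ?mul1r.
Qed.

Lemma MSE_eta_cvg : (fun p => MSE (eta p) (theta p)) @ \oo --> MSE_inf xi nu 1.
Proof.
rewrite (eq_cvg _ _ (fun p => congr1 (fun u => MSE u (theta p)) (esym (shrink1 (eta p))))).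
by apply: MSE_shrink_cvg; apply: cvg_cst.
Qed.

Lemma SPH_eta_cvg : (fun p => SPH (eta p) (theta p)) @ \oo --> SPH_inf m xi nu 1.
Proof.
rewrite (eq_cvg _ _ (fun p => congr1 (fun u => SPH u (theta p)) (esym (shrink1 (eta p))))).
by apply: SPH_shrink_cvg; [apply: cvg_cst | apply: oner_neq0].
Qed.

End Limits.

Theorem proposition3 (R : realType)
  (theta w : forall p : nat, 'I_p -> R) (nuhat : nat -> R) (m nu xi : R) :
  0 < nu -> 0 < xi ->
  (fun p => mean (theta p)) @ \oo --> m ->
  (fun p => var (theta p)) @ \oo --> xi ^+ 2 ->
  (fun p => mean (w p)) @ \oo --> 0 ->
  (fun p => var (w p)) @ \oo --> nu ^+ 2 ->
  (fun p => cov (theta p) (w p)) @ \oo --> 0 ->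
  nuhat @ \oo --> nu ->
  let eta := fun p (i : 'I_p) => theta p i + w p i in
  let c := fun p => 1 - nuhat p ^+ 2 / var (eta p) in
  (exists L : R,
     (fun p => MSE (eta p) (theta p)) @ \oo --> L /\
     (fun p => MSE (shrink (eta p) (c p)) (theta p)) @ \oo --> c_inf xi nu * L) /\
  (exists L : R,
     (fun p => SPH (eta p) (theta p)) @ \oo --> L /\
     (fun p => SPH (shrink (eta p) (c p)) (theta p)) @ \oo --> d_inf m xi nu * L) /\
  (fun p => cMSE (theta p) (eta p)) @ \oo --> c_inf xi nu /\
  (m != 0 -> (fun p => cSPH (theta p) (eta p)) @ \oo --> c_inf xi nu).
Proof.
move=> nu_gt0 xi_gt0 mean_theta var_theta mean_w var_w cov_theta_w nuhat_nu eta c.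
have c_cvg : c @ \oo --> c_inf xi nu by apply: shrink_factor_cvg.
split; [|split; [|split]].
- exists (MSE_inf xi nu 1); rewrite -MSE_inf_c_inf //.
  by split; [apply: MSE_eta_cvg | apply: MSE_shrink_cvg].
- exists (SPH_inf m xi nu 1); rewrite -SPH_inf_c_inf //.
  split; [exact: SPH_eta_cvg | apply: SPH_shrink_cvg => //].
  by rewrite gt_eqF ?c_inf_gt0.
- exact: cMSE_cvg.
- exact: cSPH_cvg.
Qed.
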